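(* Let $B$ be a C*-algebra and let $A$ be a regular subalgebra of $B$ satisfying the ideal intersection property. Let $\mathscr{R}(B)$ be the family of all regular ideals of $B$, and $\mathscr{R}'_{\mathrm{inv}}(A)$ the family of all regular, normalizer-invariant ideals of $A$. Then the map $$\alpha: J\in\mathscr{R}(B)\mapsto J\cap A\in\mathscr{R}'_{\mathrm{inv}}(A)$$ is well defined and is a boolean algebra isomorphism (an inclusion-preserving bijection with inclusion-preserving inverse), with inverse $$\beta: I\in\mathscr{R}'_{\mathrm{inv}}(A)\mapsto \mathrm{Ann}_B(\mathrm{Ann}_B(I))\in\mathscr{R}(B).$$
   Context: Ideals are closed two-sided ideals. $A\subseteq B$ is a closed *-subalgebra. A normalizer of $A$ in $B$ is $n\in B$ with $n^*An\subseteq A$ and $nAn^*\subseteq A$; $A$ is a regular subalgebra if the normalizers span a dense subspace of $B$ and $A$ contains an approximate unit for $B$. A subset $S\subseteq A$ is normalizer-invariant if $nSn^*\subseteq S$ for every normalizer $n$. For a C*-algebra $C$ and $S\subseteq C$ with $[SC]=[CS]$ ($[\cdot]$ = closed linear span), $\{x\in C: xs=0\ \forall s\in S\}=\{x\in C: sx=0\ \forall s\in S\}$, denoted $\mathrm{Ann}_C(S)$; this applies in particular to every ideal of $C$, and (for $C=B$) to every normalizer-invariant ideal of $A$. An ideal $J$ of $C$ is regular if $\mathrm{Ann}_C(\mathrm{Ann}_C(J))=J$. Regular ideals form a boolean algebra ordered by inclusion, with meet $J_1\cap J_2$, join $\mathrm{Ann}_C(\mathrm{Ann}_C(J_1+J_2))$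 and negation $\mathrm{Ann}_C(J)$. $A$ satisfies the ideal intersection property if $J\cap A\neq\{0\}$ for every nonzero ideal $J$ of $B$. *)

(* C*-algebras are set up by hand: a C*-algebra is a complete normed space B
   over the complex field C := R[i] (R : realType) with a bilinear associative
   multiplication and a conjugate-linear anti-multiplicative involution
   satisfying submultiplicativity and the C*-identity (non-unital in general). *)
From HB Require Import structures.
From mathcomp Require Import all_boot all_order all_algebra.
From mathcomp Require Import all_classical all_reals all_analysis.
From mathcomp Require Import complex.
Set Implicit Arguments. Unset Strict Implicit. Unset Printing Implicit Defensive.
Import Order.TTheory GRing.Theory Num.Theory numFieldNormedType.Exports.
Local Open Scope ring_scope.
Local Open Scope classical_set_scope.

Record is_cstar_algebra (R : realType) (B : completeNormedModType R[i])
    (mul : B -> B -> B) (star : B -> B) : Prop := IsCstarAlgebra {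
  cs_mulDl : forall (a : R[i]) (x y z : B),
      mul (a *: x + y) z = a *: mul x z + mul y z;
  cs_mulDr : forall (a : R[i]) (x y z : B),
      mul x (a *: y + z) = a *: mul x y + mul x z;
  cs_mulA : forall x y z : B, mul x (mul y z) = mul (mul x y) z;
  cs_starK : forall x : B, star (star x) = x;
  cs_starD : forall x y : B, star (x + y) = star x + star y;
  cs_starZ : forall (a : R[i]) (x : B), star (a *: x) = (a^*)%R *: star x;
  cs_starM : forall x y : B, star (mul x y) = mul (star y) (star x);
  cs_norm_mul : forall x y : B, `|mul x y| <= `|x| * `|y|;
  cs_cstar_id : forall x : B, `|mul (star x) x| = `|x| ^+ 2
}.

Definition closed_subspace (R : realType) (B : completeNormedModType R[i])
    (S : set B) : Prop :=
  closed S /\ S 0 /\ (forall x y, S x -> S y -> S (x + y)) /\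
  (forall (a : R[i]) x, S x -> S (a *: x)).

Definition cstar_subalgebra (R : realType) (B : completeNormedModType R[i])
    (mul : B -> B -> B) (star : B -> B) (A : set B) : Prop :=
  closed_subspace A /\ (forall x y, A x -> A y -> A (mul x y)) /\
  (forall x, A x -> A (star x)).

Definition ideal_of (R : realType) (B : completeNormedModType R[i])
    (mul : B -> B -> B) (C J : set B) : Prop :=
  J `<=` C /\ closed_subspace J /\
  (forall c x, C c -> J x -> J (mul c x)) /\
  (forall c x, C c -> J x -> J (mul x c)).

Definition Ann (R : realType) (B : completeNormedModType R[i])
    (mul : B -> B -> B) (C S : set B) : set B :=
  [set x | C x /\ forall s, S s -> mul x s = 0].

Definition regular_ideal (R : realType) (B : completeNormedModType R[i])
    (mul : B -> B -> B) (C J : set B) : Prop :=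
  ideal_of mul C J /\ Ann mul C (Ann mul C J) = J.

Definition normalizer (R : realType) (B : completeNormedModType R[i])
    (mul : B -> B -> B) (star : B -> B) (A : set B) (n : B) : Prop :=
  forall a, A a -> A (mul (mul (star n) a) n) /\ A (mul (mul n a) (star n)).

Definition normalizer_invariant (R : realType) (B : completeNormedModType R[i])
    (mul : B -> B -> B) (star : B -> B) (A S : set B) : Prop :=
  forall n, normalizer mul star A n -> forall x, S x -> S (mul (mul n x) (star n)).

Definition lin_span (R : realType) (B : completeNormedModType R[i])
    (S : set B) : set B :=
  [set x | exists s : seq (R[i] * B),
      (forall p, p \in s -> S p.2) /\ x = \sum_(p <- s) p.1 *: p.2].

Definition positive (R : realType) (B : completeNormedModType R[i])
    (mul : B -> B -> B) (star : B -> B) (x : B) : Prop :=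
  exists y, x = mul (star y) y.

Definition contains_approx_unit (R : realType) (B : completeNormedModType R[i])
    (mul : B -> B -> B) (star : B -> B) (A : set B) : Prop :=
  exists (I : Type) (le : I -> I -> Prop) (e : I -> B),
    (exists i : I, True) /\
    (forall i, le i i) /\ (forall i j k, le i j -> le j k -> le i k) /\
    (forall i j, exists k, le i k /\ le j k) /\
    (forall i, A (e i) /\ positive mul star (e i) /\ `|e i| <= 1) /\
    (forall i j, le i j -> positive mul star (e j - e i)) /\
    (forall (b : B) (eps : R), 0 < eps -> exists i0, forall i, le i0 i ->
        `|mul (e i) b - b| < (eps%:C)%C /\ `|mul b (e i) - b| < (eps%:C)%C).

Definition regular_subalgebra (R : realType) (B : completeNormedModType R[i])
    (mul : B -> B -> B) (star : B -> B) (A : set B) : Prop :=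
  closure (lin_span (normalizer mul star A)) = setT /\
  contains_approx_unit mul star A.

Definition ideal_intersection_property (R : realType)
    (B : completeNormedModType R[i]) (mul : B -> B -> B) (A : set B) : Prop :=
  forall J, ideal_of mul setT J -> J <> [set 0] -> J `&` A <> [set 0].

From HB Require Import structures.
From mathcomp Require Import all_boot all_order all_algebra.
From mathcomp Require Import all_classical all_reals all_analysis.
From mathcomp Require Import complex.
Set Implicit Arguments. Unset Strict Implicit. Unset Printing Implicit Defensive.
Import Order.TTheory GRing.Theory Num.Theory numFieldNormedType.Exports.
Local Open Scope ring_scope.
Local Open Scope classical_set_scope.

(* Everything rests on one identity: Ann_B(K ∩ A) = Ann_B(K) for every ideal K
   of B.  Indeed Ann_B(K ∩ A) ∩ K is an ideal of B whose intersection with A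
   is zero (an element x of it satisfies x x^* x = 0, hence x = 0), so it is
   zero by the ideal intersection property; and for z in Ann_B(K ∩ A) and k in
   K the product z k lies in it.  That Ann_B(K ∩ A) is a two-sided ideal at
   all is where regularity enters: right multiplication by a normalizer
   preserves Ann_B(I) for a normalizer-invariant ideal I of A, and normalizers
   span a dense subspace.  Since Ann_A(S) = Ann_B(S) ∩ A, the identity turns
   both composites of alpha and beta into the double annihilator identity. *)

Lemma lipschitz_continuous (K : numFieldType) (V W : normedModType K) (k : K)
    (f : V -> W) :
  0 <= k -> (forall u v, `|f u - f v| <= k * `|u - v|) -> continuous f.
Proof.
move=> k0 fk x; apply/cvgrPdist_lt => e e0.
have k1 : 0 < k + 1 by rewrite ltr_wpDl.
near=> y; apply: (le_lt_trans (fk x y)).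
apply: (@le_lt_trans _ _ ((k + 1) * `|x - y|)); first by rewrite ler_wpM2r ?lerDl.
rewrite mulrC -ltr_pdivlMr //; near: y.
by apply: cvgr_dist_lt => //; rewrite divr_gt0.
Unshelve. all: by end_near.
Qed.

Section ClosedSubspaces.
Variables (R : realType) (B : completeNormedModType R[i]).

Lemma closed_subspaceT : closed_subspace [set: B].
Proof. by split; [exact: closedT | split]. Qed.

Lemma closed_subspaceI (C D : set B) :
  closed_subspace C -> closed_subspace D -> closed_subspace (C `&` D).
Proof.
move=> [cC [C0 [CD CZ]]] [cD [D0 [DD DZ]]]; split; first exact: closedI.
split; first by split.
split.
- by move=> x y [Cx Dx] [Cy Dy]; split; [apply: CD | apply: DD].
- by move=> a x [Cx Dx]; split; [apply: CZ | apply: DZ].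
Qed.

Lemma closed_subspace_common_kernel (I : Type) (D : set I) (f : I -> B -> B) :
  (forall i, continuous (f i)) ->
  (forall i a x y, f i (a *: x + y) = a *: f i x + f i y) ->
  closed_subspace [set x | forall i, D i -> f i x = 0].
Proof.
move=> fc flin.
have f0 i : f i 0 = 0.
  by have /esym/eqP := flin i 1 0 0; rewrite !scale1r addr0 -subr_eq0 addrK => /eqP.
split; last split; last split.
- have -> : [set x | forall i, D i -> f i x = 0] = \bigcap_(i in D) (f i @^-1` [set 0]).
    by apply/seteqP; split => x /= H i /H.
  apply: closed_bigI => i _; apply: preimage_closed => [x _|]; first exact: fc.
  exact/accessible_closed_set1/hausdorff_accessible/norm_hausdorff.
- by move=> i _; rewrite f0.
- by move=> x y fx fy i Di; rewrite -[x]scale1r flin scale1r fx // fy // addr0.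
- by move=> a x fx i Di; rewrite -[a *: x]addr0 flin fx // f0 scaler0 addr0.
Qed.

Lemma closure_span_sub (N S : set B) :
  closed_subspace S -> N `<=` S -> closure (lin_span N) `<=` S.
Proof.
move=> [cS [S0 [SD SZ]]] NS; rewrite (closure_id S).1 //; apply: closureS.
move=> _ [s [sN ->]]; elim: s sN => [|p s IHs] sN; first by rewrite big_nil.
rewrite big_cons; apply: SD; first by apply/SZ/NS/sN; rewrite mem_head.
by apply: IHs => q qs; apply: sN; rewrite in_cons qs orbT.
Qed.

End ClosedSubspaces.

Section CstarAlgebra.
Variables (R : realType) (B : completeNormedModType R[i]).
Variables (mul : B -> B -> B) (star : B -> B).
Hypothesis HB : is_cstar_algebra mul star.

Lemma cmulBl x y z : mul (x - y) z = mul x z - mul y z.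
Proof. by rewrite addrC -scaleN1r (cs_mulDl HB) scaleN1r addrC. Qed.

Lemma cmulBr x y z : mul x (y - z) = mul x y - mul x z.
Proof. by rewrite addrC -scaleN1r (cs_mulDr HB) scaleN1r addrC. Qed.

Lemma cmul0l y : mul 0 y = 0.
Proof. by have := cmulBl 0 0 y; rewrite subrr => ->; rewrite subrr. Qed.

Lemma cmul0r x : mul x 0 = 0.
Proof. by have := cmulBr x 0 0; rewrite subrr => ->; rewrite subrr. Qed.

Lemma star0 : star 0 = 0.
Proof. by rewrite -(scale0r (0 : B)) (cs_starZ HB) conjC0 !scale0r. Qed.

Lemma cstar_eq0 x : mul (star x) x = 0 -> x = 0.
Proof.
move=> xx0; apply/normr0_eq0/eqP.
by rewrite -sqrf_eq0 -(cs_cstar_id HB) xx0 normr0.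
Qed.

Lemma cstar_eq0r x : mul x (star x) = 0 -> x = 0.
Proof.
rewrite -{1}[x](cs_starK HB) => /cstar_eq0 x0.
by rewrite -[x](cs_starK HB) x0 star0.
Qed.

Lemma cstar_cube_eq0 y : mul y (mul (star y) y) = 0 -> y = 0.
Proof.
move=> yyy0; apply/cstar_eq0/cstar_eq0.
by rewrite (cs_starM HB) (cs_starK HB) -(cs_mulA HB) yyy0 cmul0r.
Qed.

Lemma continuous_cmull x : continuous (mul x).
Proof.
apply: (@lipschitz_continuous _ _ _ `|x|) => // u v.
by rewrite -cmulBr (cs_norm_mul HB).
Qed.

Lemma continuous_cmulr y : continuous (mul^~ y).
Proof.
apply: (@lipschitz_continuous _ _ _ `|y|) => // u v.
by rewrite -cmulBl mulrC (cs_norm_mul HB).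
Qed.

Lemma cstar_subalgebraT : cstar_subalgebra mul star [set: B].
Proof. by split; [exact: closed_subspaceT | split]. Qed.

Lemma AnnE (C S : set B) : Ann mul C S = Ann mul setT S `&` C.
Proof. by apply/seteqP; split => [x [Cx xS] | x [[_ xS] Cx]]. Qed.

Lemma AnnS (C S1 S2 : set B) : S1 `<=` S2 -> Ann mul C S2 `<=` Ann mul C S1.
Proof. by move=> S12 x [Cx xS]; split => // s /S12; apply: xS. Qed.

Lemma closed_subspace_Ann (C S : set B) :
  closed_subspace C -> closed_subspace (Ann mul C S).
Proof.
move=> cC; rewrite AnnE; apply: closed_subspaceI => //.
have -> : Ann mul setT S = [set x | forall s, S s -> mul^~ s x = 0].
  by apply/seteqP; split => [x [_ xS] | x xS].
apply: closed_subspace_common_kernel => [s|s a x y]; first exact: continuous_cmulr.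
by rewrite (cs_mulDl HB).
Qed.

Lemma ideal_setI (C K J : set B) :
  ideal_of mul C K -> ideal_of mul C J -> ideal_of mul C (K `&` J).
Proof.
move=> [KC [cK [Kl Kr]]] [JC [cJ [Jl Jr]]].
split; first by move=> x [/KC].
split; first exact: closed_subspaceI.
by split=> c x Cc [Kx Jx]; split; [apply: Kl | apply: Jl | apply: Kr | apply: Jr].
Qed.

Lemma ideal_Ann (C L : set B) : cstar_subalgebra mul star C ->
  ideal_of mul C L -> ideal_of mul C (Ann mul C L).
Proof.
move=> [cC [Cmul _]] [_ [_ [Ll _]]].
split; first by move=> x [].
split; first exact: closed_subspace_Ann.
split=> c x Cc [Cx xL]; split; try exact: Cmul.
- by move=> s Ls; rewrite -(cs_mulA HB) xL // cmul0r.
- by move=> s Ls; rewrite -(cs_mulA HB) xL //; apply: Ll.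
Qed.

(* For y in Ann_C(L) and l in L, w := l y lies in L and annihilates L from the
   left, while w^* w lies in L: hence w w^* w = 0. *)
Lemma Ann_sym (C L : set B) : cstar_subalgebra mul star C -> ideal_of mul C L ->
  forall y l, Ann mul C L y -> L l -> mul l y = 0.
Proof.
move=> [_ [_ Cstar]] [LC [_ [Ll Lr]]] y l [Cy yL] Ll'.
have Lw : L (mul l y) by apply: Lr.
apply: cstar_cube_eq0; rewrite -(cs_mulA HB l) yL ?cmul0r //.
by apply: Ll => //; apply/Cstar/LC.
Qed.

Lemma sub_AnnK (C L : set B) : cstar_subalgebra mul star C -> ideal_of mul C L ->
  L `<=` Ann mul C (Ann mul C L).
Proof.
move=> HC HL l Ll; split; first by case: HL => LC _; apply: LC.
by move=> y Ly; apply: (Ann_sym HC HL).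
Qed.

Lemma Ann3 (C L : set B) : cstar_subalgebra mul star C -> ideal_of mul C L ->
  Ann mul C (Ann mul C (Ann mul C L)) = Ann mul C L.
Proof.
move=> HC HL; apply/seteqP; split; last exact/sub_AnnK/ideal_Ann.
exact/AnnS/sub_AnnK.
Qed.

Section RegularSubalgebra.
Variable A : set B.
Hypothesis HA : cstar_subalgebra mul star A.

Lemma ideal_setIA (K : set B) : ideal_of mul setT K -> ideal_of mul A (K `&` A).
Proof.
move=> [_ [cK [Kl Kr]]]; case: HA => [cA [Amul _]].
split; first by move=> x [].
split; first exact: closed_subspaceI.
by split=> c x Ac [Kx Ax]; split; [apply: Kl | apply: Amul | apply: Kr | apply: Amul].
Qed.

Lemma normalizer_invariant_setIA (K : set B) :
  ideal_of mul setT K -> normalizer_invariant mul star A (K `&` A).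
Proof.
move=> [_ [_ [Kl Kr]]] n nA x [Kx Ax]; split; last exact: (nA x Ax).2.
by apply: Kr => //; apply: Kl.
Qed.

Hypothesis normalizers_dense : closure (lin_span (normalizer mul star A)) = setT.

(* For a normalizer n and i in I, v := x n i has v v^* = x (n (i i^* ) n^* ) x^*
   with n (i i^* ) n^* in I. *)
Lemma Ann_mulr (I : set B) : ideal_of mul A I -> normalizer_invariant mul star A I ->
  forall x b, Ann mul setT I x -> Ann mul setT I (mul x b).
Proof.
move=> [IA [_ [_ Ir]]] Iinv x b [_ xI]; split => //.
pose S := [set b | forall i, I i -> mul (mul x b) i = 0].
suff : closure (lin_span (normalizer mul star A)) `<=` S by rewrite normalizers_dense; apply.
apply: closure_span_sub.
  apply: closed_subspace_common_kernel => [i y|i a u v].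
    exact: (continuous_comp (@continuous_cmull x y) (@continuous_cmulr i _)).
  by rewrite (cs_mulDr HB) (cs_mulDl HB).
move=> n nA i Ii; apply: cstar_eq0r.
have Iii : I (mul i (star i)) by apply: Ir => //; case: HA => _ [_]; apply; apply: IA.
have -> : mul (mul (mul x n) i) (star (mul (mul x n) i)) =
          mul (mul x (mul (mul n (mul i (star i))) (star n))) (star x).
  by rewrite !(cs_starM HB) !(cs_mulA HB).
by rewrite xI ?cmul0l //; apply: Iinv.
Qed.

Lemma ideal_Ann_invariant (I : set B) :
  ideal_of mul A I -> normalizer_invariant mul star A I ->
  ideal_of mul setT (Ann mul setT I).
Proof.
move=> HI Iinv; split => //; split; first exact/closed_subspace_Ann/closed_subspaceT.
split=> c x _ xI; last exact: Ann_mulr.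
by case: xI => _ xI; split => // s Is; rewrite -(cs_mulA HB) xI ?cmul0r.
Qed.

Hypothesis iip : ideal_intersection_property mul A.

Lemma ideal_sub0 (J : set B) :
  ideal_of mul setT J -> J `&` A `<=` [set 0] -> J `<=` [set 0].
Proof.
move=> HJ JA0; have [-> // | J_neq0] := pselect (J = [set 0]).
exfalso; apply: (iip HJ J_neq0); apply/seteqP; split => // _ ->.
by split; [case: HJ => _ [[_ []]] | case: HA => [[_ []]]].
Qed.

Lemma Ann_setIA (K : set B) : ideal_of mul setT K ->
  Ann mul setT (K `&` A) = Ann mul setT K.
Proof.
move=> HK; apply/seteqP; split; last by apply: AnnS => x [].
have HKA := ideal_Ann_invariant (ideal_setIA HK) (normalizer_invariant_setIA HK).
have sub0 : Ann mul setT (K `&` A) `&` K `<=` [set 0].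
  apply: ideal_sub0; first exact: ideal_setI.
  move=> y [[[_ yKA] Ky] Ay]; apply/cstar_cube_eq0/yKA; split.
  - by case: HK => _ [_ [Kl _]]; apply: Kl.
  - by case: HA => _ [Amul Astar]; apply: Amul => //; apply: Astar.
move=> z zKA; split => // k Kk; apply: sub0; split.
- by case: HKA => _ [_ [_]]; apply.
- by case: HK => _ [_ [Kl _]]; apply: Kl.
Qed.

End RegularSubalgebra.
End CstarAlgebra.

Theorem corollary4p5 (R : realType) (B : completeNormedModType R[i])
    (mul : B -> B -> B) (star : B -> B) (A : set B)
    (HB : is_cstar_algebra mul star)
    (HA : cstar_subalgebra mul star A)
    (Hreg : regular_subalgebra mul star A)
    (Hiip : ideal_intersection_property mul A) :
  let alpha := fun J : set B => J `&` A in
  let beta := fun I : set B => Ann mul setT (Ann mul setT I) in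
  (* alpha is well defined: R(B) -> R'_inv(A) *)
  (forall J, regular_ideal mul setT J ->
     regular_ideal mul A (alpha J) /\ normalizer_invariant mul star A (alpha J)) /\
  (* beta is well defined: R'_inv(A) -> R(B) *)
  (forall I, regular_ideal mul A I -> normalizer_invariant mul star A I ->
     regular_ideal mul setT (beta I)) /\
  (* beta o alpha = id and alpha o beta = id *)
  (forall J, regular_ideal mul setT J -> beta (alpha J) = J) /\
  (forall I, regular_ideal mul A I -> normalizer_invariant mul star A I ->
     alpha (beta I) = I) /\
  (* both are inclusion preserving *)
  (forall J1 J2, regular_ideal mul setT J1 -> regular_ideal mul setT J2 ->
     J1 `<=` J2 -> alpha J1 `<=` alpha J2) /\
  (forall I1 I2, regular_ideal mul A I1 -> normalizer_invariant mul star A I1 ->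
     regular_ideal mul A I2 -> normalizer_invariant mul star A I2 ->
     I1 `<=` I2 -> beta I1 `<=` beta I2).
Proof.
move=> alpha beta; rewrite {}/alpha {}/beta; case: Hreg => dense _.
have AnnIA := Ann_setIA HB HA dense Hiip.
have HT := cstar_subalgebraT mul star.
have AnnI_ideal I := ideal_Ann_invariant HB HA dense (I := I).
split; [|split; [|split; [|split; [|split]]]].
- move=> J [HJ JK]; split; last exact: normalizer_invariant_setIA.
  split; first exact: (ideal_setIA HA HJ).
  rewrite !(AnnE mul A) (AnnIA J) // (AnnIA (Ann mul setT J)) ?JK //.
  exact: (ideal_Ann HB HT HJ).
- move=> I [HI _] Iinv; split; first exact/(ideal_Ann HB HT)/AnnI_ideal.
  exact/(Ann3 HB HT)/AnnI_ideal.
- by move=> J [HJ JK]; rewrite AnnIA.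
- move=> I [HI IK] Iinv; rewrite -{2}IK !(AnnE mul A) AnnIA //.
  exact: AnnI_ideal.
- by move=> J1 J2 _ _ J12 x [J1x Ax]; split => //; apply: J12.
- by move=> I1 I2 _ _ _ _ I12; apply/AnnS/AnnS.
Qed.
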